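(* Let $(\Gamma,c)$ be a real congruence group with $c=c_0$ (where $c_0(x+iy)=-x+iy$) and such that $\Gamma$ is contained in (the image in $\mathrm{PSL}_2(\mathbf{Z})$ of) $\Gamma_0(N)$ for some $N>2$. Then $X_\Gamma$ has no real elliptic point of even order.
   Context: $\mathfrak{h}$ is the upper half-plane. For a complex conjugation $c$ (anti-holomorphic involution of $\mathfrak h$) and $\gamma\in\mathrm{PSL}_2(\mathbf{R})$, $\gamma^c$ denotes $c\gamma c$. A real congruence group is a pair $(\Gamma,c)$ where $\Gamma\subseteq\mathrm{PSL}_2(\mathbf{Z})$, $c$ is a complex conjugation with $\Gamma^c=\Gamma$, and for some $N\ge1$, $\Gamma$ contains $\Gamma(N)$ (image of matrices $\equiv I\bmod N$) and $\Gamma(N)^c=\Gamma(N)$. $X_\Gamma=\mathfrak{h}^*/\Gamma$ with $\mathfrak h^*=\mathfrak h\cup\mathbf{Q}\mathbf{P}^1$, and $c$ descends to an involution of $X_\Gamma$; a real point is a fixed point. An elliptic point of even order is a point of $\mathfrak{h}$ whose stabilizer in $\Gamma$ has even order. $\Gamma_0(N)$ consists of matrices in $\mathrm{SL}_2(\mathbf{Z})$ with lower-left entry divisible by $N$. *)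

From HB Require Import structures.
From mathcomp Require Import all_boot all_order all_algebra.
From mathcomp Require Import boolp classical_sets cardinality reals.
From mathcomp Require Import complex.
Set Implicit Arguments.
Unset Strict Implicit.
Unset Printing Implicit Defensive.
Import Order.TTheory GRing.Theory Num.Theory.
Local Open Scope ring_scope.
Local Open Scope classical_set_scope.

(* Elements of SL_2(Z): integer 2x2 matrices of determinant 1.
   PSL_2(Z) = SL_2(Z)/{+-1}; a subgroup Gamma of PSL_2(Z) is encoded by
   its preimage G in SL_2(Z) (a subgroup containing -1). *)
Definition SL2Z (g : 'M[int]_2) : Prop := \det g = 1.

Definition is_PSL2Z_subgroup (G : set 'M[int]_2) : Prop :=
  [/\ (forall g, G g -> SL2Z g),
      G 1%:M,
      (forall g h, G g -> G h -> G (g *m h)),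
      (forall g, G g -> G (invmx g)) &
      (forall g, G g -> G (- g))].

Definition ea (g : 'M[int]_2) := g 0 0.
Definition eb (g : 'M[int]_2) := g 0 1.
Definition ec (g : 'M[int]_2) := g 1 0.
Definition ed (g : 'M[int]_2) := g 1 1.

(* Preimage in SL_2(Z) of Gamma(N) subset PSL_2(Z): matrices congruent to
   +-I modulo N. *)
Definition congI (N : nat) (g : 'M[int]_2) : Prop :=
  forall i j : 'I_2, (N%:Z %| g i j - (i == j)%:Z)%Z.
Definition GammaN (N : nat) (g : 'M[int]_2) : Prop :=
  SL2Z g /\ (congI N g \/ congI N (- g)).

(* Gamma_0(M): lower-left entry divisible by M (a sign-invariant
   condition, so this is also the preimage of its image in PSL_2(Z)). *)
Definition Gamma0 (M : nat) (g : 'M[int]_2) : Prop :=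
  SL2Z g /\ (M%:Z %| ec g)%Z.

Definition c0 (R : rcfType) (z : R[i]) : R[i] := - (Num.conj z).

(* c0 is induced by eps = diag(-1,1) in GL_2(Z); for gamma in PSL_2(R),
   gamma^c0 = c0 gamma c0 is the Moebius map of eps * gamma * eps,
   i.e. [[a,b],[c,d]] |-> [[a,-b],[-c,d]]. *)
Definition eps_c0 : 'M[int]_2 := \matrix_(i < 2, j < 2)
  (if i == j then (if i == 0 then -1 else 1) else 0).
Definition conj_c0 (g : 'M[int]_2) : 'M[int]_2 := eps_c0 *m g *m eps_c0.

Definition mob (R : rcfType) (g : 'M[int]_2) (z : R[i]) : R[i] :=
  ((ea g)%:~R * z + (eb g)%:~R) / ((ec g)%:~R * z + (ed g)%:~R).

Definition in_h (R : rcfType) (z : R[i]) : Prop := 0 < complex.Im z.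

Definition real_congruence_group_c0 (G : set 'M[int]_2) : Prop :=
  [/\ is_PSL2Z_subgroup G,
      (forall g, G (conj_c0 g) <-> G g) &
      exists N : nat, [/\ (0 < N)%N,
        (forall g, GammaN N g -> G g) &
        (forall g, GammaN N (conj_c0 g) <-> GammaN N g)]].

(* Stabilizer of tau in Gamma, as a subset of PSL_2(Z): each element is the
   class {g, -g} of a matrix. *)
Definition psl_class (g : 'M[int]_2) : set 'M[int]_2 := [set g; - g].
Definition stabilizer (R : rcfType) (G : set 'M[int]_2) (tau : R[i])
  : set (set 'M[int]_2) :=
  psl_class @` [set g | G g /\ mob g tau = tau].

Definition elliptic_even (R : rcfType) (G : set 'M[int]_2) (tau : R[i]) : Prop :=
  in_h tau /\ exists n : nat, (stabilizer G tau #= `I_(n.*2))%card.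

(* The image of tau in X_Gamma is a real point: c0 fixes its Gamma-orbit. *)
Definition real_point (R : rcfType) (G : set 'M[int]_2) (tau : R[i]) : Prop :=
  exists g, G g /\ mob g tau = c0 tau.

(* If the image of [tau] is real, some [h] in Gamma maps [tau] to [c0 tau] =
   -conj tau, and comparing imaginary parts forces the diagonal entries of [h]
   to agree.  If some [g] in Gamma of trace 0 (an element of order 2 of
   PSL_2(Z)) fixed [tau], then [hg] would also map [tau] to [c0 tau]; the
   resulting conditions on the entries of [h], [g] and [hg] in Gamma_0(M)
   reduce modulo M to [a^2 = 1], [x^2 = -1], [2ax = 0], whence M divides 2.
   So the stabilizer of [tau] has no element of order 2, and pairing each of
   its elements with its inverse shows that its order is odd. *)

From HB Require Import structures.
From mathcomp Require Import all_boot all_order all_algebra.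
From mathcomp Require Import boolp classical_sets cardinality reals.
From mathcomp Require Import complex.
From mathcomp Require Import ring lra zify finmap.
Set Implicit Arguments.
Unset Strict Implicit.
Unset Printing Implicit Defensive.
Import Order.TTheory GRing.Theory Num.Theory.
Local Open Scope ring_scope.

Lemma odd_card_involution (T : finType) (f : T -> T) (x0 : T) :
  involutive f -> f x0 = x0 -> (forall x, f x = x -> x = x0) -> odd #|T|.
Proof.
move=> fK fx0 fix0.
pose r := @enum_rank T.
pose P := [set x | (r x < r (f x))%N].
pose Q := [set x | (r (f x) < r x)%N].
have fP : f @: P = Q.
  by rewrite (can2_imset_pre _ fK fK); apply/setP => x; rewrite !inE fK.
have PQ : [set~ x0] = P :|: Q.
  apply/setP => x; rewrite !inE -neq_ltn val_eqE (inj_eq (@enum_rank_inj T)).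
  apply/idP/idP => [|]; last by apply: contra => /eqP ->; rewrite fx0.
  by apply: contra => /eqP /esym /fix0 ->.
have P_Q : P :&: Q = finset.set0.
  by apply/setP => x; rewrite !inE; apply/negP => /andP[/ltn_trans h /h]; rewrite ltnn.
have := cardsC1 x0; rewrite PQ cardsU P_Q cards0 subn0 -fP card_imset; last exact: can_inj fK.
have : (0 < #|T|)%N by apply/card_gt0P; exists x0.
by case: #|T| => // m _ /= <-; rewrite addnn odd_double.
Qed.

Lemma odd_card_set_involution (T : choiceType) (S : set T) (f : T -> T) (x0 : T) m :
  (forall x, S x -> S (f x)) -> (forall x, S x -> f (f x) = x) -> S x0 ->
  f x0 = x0 -> (forall x, S x -> f x = x -> x = x0) -> (S #= `I_m)%card -> odd m.
Proof.
move=> fS fK Sx0 fx0 fix0 cardS.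
have S_fin : finite_set S by exists m.
pose F := fset_set S.
have inF x : x \in F <-> S x by rewrite /F in_fset_set // in_setE.
rewrite -(card_fset_set cardS) -/F cardfE.
have x0F : x0 \in F by apply/inF.
pose g (x : F) : F := insubd x (f (val x)).
have gE (x : F) : val (g x) = f (val x).
  by rewrite val_insubd; case: ifPn => // /negP []; apply/inF/fS/inF/valP.
apply: (@odd_card_involution _ g [` x0F]%fset).
- by move=> x; apply/val_inj; rewrite !gE fK //; apply/inF/valP.
- by apply/val_inj; rewrite gE /= fx0.
- move=> x /(congr1 val); rewrite gE => fx_x.
  by apply/val_inj; apply: fix0 fx_x; apply/inF/valP.
Qed.

Lemma ord2P (i : 'I_2) : i = 0 \/ i = 1.
Proof. by case: i => [[|[|//]] ?]; [left | right]; apply: val_inj. Qed.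

Lemma mx2P (T : Type) (A B : 'M[T]_2) :
  A 0 0 = B 0 0 -> A 0 1 = B 0 1 -> A 1 0 = B 1 0 -> A 1 1 = B 1 1 -> A = B.
Proof.
by move=> ? ? ? ?; apply/matrixP => i j; case: (ord2P i) (ord2P j) => -> [] ->.
Qed.

Lemma sum_ord2 (V : nmodType) (F : 'I_2 -> V) : \sum_(k < 2) F k = F 0 + F 1.
Proof. by rewrite big_ord_recl big_ord1; congr (_ + F _); apply: val_inj. Qed.

(* Cayley-Hamilton: [(\tr g)%:M - g] is the adjugate of a 2x2 matrix. *)
Definition inv2 {R : comPzRingType} (g : 'M[R]_2) := (\tr g)%:M - g.

Section TwoByTwo.
Variable R : comPzRingType.
Implicit Types g : 'M[R]_2.

Lemma det_mx2 g : \det g = g 0 0 * g 1 1 - g 0 1 * g 1 0.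
Proof.
rewrite (expand_det_row _ 0) sum_ord2 /cofactor !det_mx11 !mxE.
rewrite (_ : lift 0 0 = 1 :> 'I_2); last exact: val_inj.
rewrite (_ : lift 1 0 = 0 :> 'I_2); last exact: val_inj.
by rewrite /= expr0 expr1 mul1r mulN1r mulrN.
Qed.

Lemma trace_mx2 g : \tr g = g 0 0 + g 1 1.
Proof. exact: sum_ord2. Qed.

Lemma inv2E g : [/\ inv2 g 0 0 = g 1 1, inv2 g 0 1 = - g 0 1,
   inv2 g 1 0 = - g 1 0 & inv2 g 1 1 = g 0 0].
Proof. by rewrite !mxE /= trace_mx2 sub0r; split; ring. Qed.

Lemma mul_inv2 g : g *m inv2 g = (\det g)%:M.
Proof. by apply: mx2P; rewrite !mxE !sum_ord2 !mxE /= det_mx2 trace_mx2; ring. Qed.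

Lemma det_inv2 g : \det (inv2 g) = \det g.
Proof. by have [e00 e01 e10 e11] := inv2E g; rewrite !det_mx2 e00 e01 e10 e11; ring. Qed.

Lemma inv2N g : inv2 (- g) = - inv2 g.
Proof. by rewrite /inv2 !raddfN /= opprK opprB addrC. Qed.

Lemma inv2K : involutive (@inv2 R).
Proof. by move=> g; rewrite /inv2 raddfB /= mxtrace_scalar mulr2n addrK subKr. Qed.

End TwoByTwo.

Lemma invmx_SL2 (R : comUnitRingType) (g : 'M[R]_2) :
  \det g = 1 -> invmx g = inv2 g.
Proof.
move=> det_g; have g_unit : g \in unitmx by rewrite unitmxE det_g unitr1.
by rewrite -[RHS]mul1mx -(mulVmx g_unit) -mulmxA mul_inv2 det_g mulmx1.
Qed.

Lemma inv2_eq_opp (R : comPzRingType) (g : 'M[R]_2) : inv2 g = - g -> \tr g = 0.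
Proof.
rewrite /inv2 => /eqP; rewrite subr_eq addNr => /eqP /matrixP /(_ 0 0).
by rewrite !mxE.
Qed.

Lemma inv2_eq_id (R : numDomainType) (g : 'M[R]_2) :
  \det g = 1 -> inv2 g = g -> g = 1%:M \/ g = - 1%:M.
Proof.
have [e00 e01 e10 e11] := inv2E g; move=> det_g inv2_g.
move: e00 e01 e10; rewrite inv2_g => d_a /esym/eqP; rewrite eqNr => /eqP b0.
move=> /esym/eqP; rewrite eqNr => /eqP c0.
move: det_g; rewrite det_mx2 b0 mul0r subr0 -d_a => /eqP.
rewrite -expr2 sqrf_eq1 => /orP[] /eqP a_pm1.
- by left; apply: mx2P; rewrite !mxE /= ?b0 ?c0 -?d_a.
- by right; apply: mx2P; rewrite !mxE /= ?b0 ?c0 -?d_a ?oppr0.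
Qed.

Lemma inv2_1 : inv2 (1%:M : 'M[int]_2) = 1%:M.
Proof.
have [e00 e01 e10 e11] := inv2E (1%:M : 'M[int]_2).
by apply: mx2P; rewrite ?e00 ?e01 ?e10 ?e11 !mxE /= ?oppr0.
Qed.

Local Open Scope complex_scope.

Lemma complex_intr (R : rcfType) (k : int) : (k%:~R : R[i]) = (k%:~R : R) +i* 0.
Proof. by rewrite -(rmorph_int (real_complex R) k). Qed.

Section Moebius.
Variable R : rcfType.
Implicit Types (g h : 'M[int]_2) (z w u : R[i]).

(* [mob g z = w] with the denominator cleared; unlike [mob], this relation
   composes without any side condition. *)
Definition mob_rel g z w :=
  (ea g)%:~R * z + (eb g)%:~R = w * ((ec g)%:~R * z + (ed g)%:~R).

Lemma mob_den_neq0 g z : in_h z -> \det g = 1 -> (ec g)%:~R * z + (ed g)%:~R != 0.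
Proof.
case: z => x y; rewrite /in_h /= => y_gt0; apply: contra_eq_neq.
rewrite !complex_intr => /eqP; rewrite eq_complex /=.
rewrite !(mul0r, addr0, subr0) => /andP[/eqP re /eqP im].
have c0 : ec g = 0.
  by apply/eqP; move/eqP: im; rewrite mulf_eq0 (gt_eqF y_gt0) orbF intr_eq0.
move: re; rewrite c0 mul0r add0r => /eqP; rewrite intr_eq0 => /eqP d0.
by rewrite det_mx2 -/(ec g) -/(ed g) c0 d0 !mulr0 subrr.
Qed.

Lemma mob_relP g z w : in_h z -> \det g = 1 -> mob g z = w <-> mob_rel g z w.
Proof.
move=> z_h det_g; have den := mob_den_neq0 z_h det_g.
by rewrite /mob /mob_rel; split=> [<-|->]; [rewrite divfK | rewrite mulfK].
Qed.

Lemma mob_rel_mul g h z w u : mob_rel g z w -> mob_rel h w u -> mob_rel (h *m g) z u.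
Proof.
rewrite /mob_rel /ea /eb /ec /ed !mxE !sum_ord2 !intrD !intrM => Eg Eh.
apply/eqP; rewrite -subr_eq0; apply/eqP.
transitivity (((h 0 0)%:~R - u * (h 1 0)%:~R) *
    ((g 0 0)%:~R * z + (g 0 1)%:~R - w * ((g 1 0)%:~R * z + (g 1 1)%:~R))
  + ((g 1 0)%:~R * z + (g 1 1)%:~R) *
    ((h 0 0)%:~R * w + (h 0 1)%:~R - u * ((h 1 0)%:~R * w + (h 1 1)%:~R))).
  by ring.
by rewrite Eg Eh !subrr !mulr0 addr0.
Qed.

Lemma mob_rel_inv2 g z w : mob_rel g z w -> mob_rel (inv2 g) w z.
Proof.
have [e00 e01 e10 e11] := inv2E g.
rewrite /mob_rel /ea /eb /ec /ed e00 e01 e10 e11 !intrN => Eg.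
apply/eqP; rewrite -subr_eq0; apply/eqP.
transitivity (- ((g 0 0)%:~R * z + (g 0 1)%:~R - w * ((g 1 0)%:~R * z + (g 1 1)%:~R))).
  by ring.
by rewrite Eg subrr oppr0.
Qed.

Lemma mob_rel_c0_diag g z : in_h z -> mob_rel g z (c0 z) -> ea g = ed g.
Proof.
case: z => x y; rewrite /in_h /= => y_gt0; rewrite /mob_rel /c0 !complex_intr.
move=> /(congr1 (@complex.Im R)) /= E.
apply/eqP; rewrite -(eqr_int R); apply/eqP.
apply: (mulIf (lt0r_neq0 y_gt0)); lra.
Qed.

Lemma mob1 z : mob 1%:M z = z.
Proof. by rewrite /mob /ea /eb /ec /ed !mxE /= mul1r mul0r add0r addr0 divr1. Qed.

End Moebius.

Lemma dvdz2_sqr1_sqrN1 (M a x : int) :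
  (M %| a ^+ 2 - 1)%Z -> (M %| x ^+ 2 + 1)%Z -> (M %| 2 * a * x)%Z -> (M %| 2)%Z.
Proof.
move=> Ma Mx Max.
have -> : 2%Z = x ^+ 2 * 2 * (a ^+ 2 - 1) + 2 * (x ^+ 2 + 1) - a * x * (2 * a * x) by ring.
by apply: rpredB; [apply: rpredD|]; apply: dvdz_mull.
Qed.

(* Modulo M the hypotheses say [a^2 = 1], [x^2 = -1] and [2ax = 0] for the
   upper-left entries [a] of [h] and [x] of [g]. *)
Lemma Gamma0_trace0_dvdz2 (M : nat) (h g : 'M[int]_2) :
  Gamma0 M h -> Gamma0 M g -> ea h = ed h -> ea (h *m g) = ed (h *m g) ->
  \tr g = 0 -> (M%:Z %| 2)%Z.
Proof.
rewrite /Gamma0 /SL2Z /ea /eb /ec /ed !mxE !sum_ord2 trace_mx2 !det_mx2.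
move=> [det_h M_ch] [det_g M_cg] a_h diag_hg /eqP; rewrite addrC addr_eq0 => /eqP d_g.
apply: (@dvdz2_sqr1_sqrN1 _ (h 0 0) (g 0 0)).
- have -> : h 0 0 ^+ 2 - 1 = h 0 1 * h 1 0 by rewrite -det_h -a_h; ring.
  exact: dvdz_mull.
- have -> : g 0 0 ^+ 2 + 1 = - (g 0 1 * g 1 0) by rewrite -det_g d_g; ring.
  by rewrite rpredN dvdz_mull.
- have -> : 2 * h 0 0 * g 0 0 = h 1 0 * g 0 1 - h 0 1 * g 1 0.
    move/eqP: diag_hg; rewrite -a_h d_g -subr_eq0 => /eqP E.
    by apply/eqP; rewrite -subr_eq0 -E; apply/eqP; ring.
  by apply: rpredB; [exact: dvdz_mulr | exact: dvdz_mull].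
Qed.

Lemma Gamma0_stabilizer_trace_neq0 (R : rcfType) (M : nat) (h g : 'M[int]_2) (tau : R[i]) :
  (2 < M)%N -> in_h tau -> Gamma0 M h -> Gamma0 M g ->
  mob h tau = c0 tau -> mob g tau = tau -> \tr g != 0.
Proof.
move=> M_gt2 tau_h h0 g0.
move=> /(mob_relP _ tau_h h0.1) h_tau /(mob_relP _ tau_h g0.1) g_tau.
have diag_h := mob_rel_c0_diag tau_h h_tau.
have diag_hg := mob_rel_c0_diag tau_h (mob_rel_mul g_tau h_tau).
apply/eqP => /(Gamma0_trace0_dvdz2 h0 g0 diag_h diag_hg).
by rewrite dvdzE /= => /dvdn_leq; lia.
Qed.

Local Open Scope classical_set_scope.

Lemma psl_classN (g : 'M[int]_2) : psl_class (- g) = psl_class g.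
Proof. by apply/seteqP; split=> x /= [] ->; rewrite /psl_class /= ?opprK; tauto. Qed.

Lemma psl_class_eq (a b : 'M[int]_2) : psl_class a = psl_class b -> a = b \/ a = - b.
Proof. by move=> e; have : psl_class b a by rewrite -e; left. Qed.

Lemma image_inv2_psl_class (g : 'M[int]_2) : inv2 @` psl_class g = psl_class (inv2 g).
Proof.
apply/seteqP; split=> x /=.
- by case=> y [] -> <-; [left | right; rewrite inv2N].
- by case=> ->; [exists g; [left |] | exists (- g); [right | rewrite inv2N]].
Qed.

(* [\tr g = 0] characterizes the elements of order 2 of PSL_2(Z); without them,
   inversion is a fixed-point-free involution of the stabilizer minus the identity. *)
Lemma odd_card_stabilizer (R : rcfType) (G : set 'M[int]_2) (tau : R[i]) m :
  is_PSL2Z_subgroup G -> in_h tau ->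
  (forall g, G g -> mob g tau = tau -> \tr g != 0) ->
  (stabilizer G tau #= `I_m)%card -> odd m.
Proof.
move=> [G_SL2 G1 _ GV _] tau_h tr_neq0.
apply: (odd_card_set_involution (f := image^~ inv2) (x0 := psl_class 1%:M)).
- move=> _ [g [Gg g_tau] <-]; rewrite image_inv2_psl_class.
  exists (inv2 g) => //; split; first by rewrite -invmx_SL2; [apply: GV | apply: G_SL2].
  have det_g := G_SL2 g Gg.
  apply/(mob_relP _ tau_h); first by rewrite det_inv2.
  exact/mob_rel_inv2/(mob_relP _ tau_h det_g).
- by move=> _ [g _ <-]; rewrite !image_inv2_psl_class inv2K.
- by exists 1%:M => //; split; [apply: G1 | apply: mob1].
- by rewrite image_inv2_psl_class inv2_1.
- move=> _ [g [Gg g_tau] <-]; rewrite image_inv2_psl_class => /psl_class_eq [].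
  + by move/(inv2_eq_id (G_SL2 g Gg)) => [] ->; rewrite ?psl_classN.
  + by move/inv2_eq_opp/eqP; rewrite (negbTE (tr_neq0 g Gg g_tau)).
Qed.

Theorem proposition5p11 (R : realType) (G : set 'M[int]_2)
  (HG : real_congruence_group_c0 G)
  (H0 : exists M : nat, (2 < M)%N /\ (forall g, G g -> Gamma0 M g)) :
  ~ (exists tau : R[i], elliptic_even G tau /\ real_point G tau).
Proof.
case: H0 => M [M_gt2 G_Gamma0]; case: HG => G_subgroup _ _.
move=> [tau [[tau_h [n card_stab]] [h [Gh h_tau]]]].
suff : odd n.*2 by rewrite odd_double.
apply: (odd_card_stabilizer G_subgroup tau_h _ card_stab) => g Gg g_tau.
exact: Gamma0_stabilizer_trace_neq0 M_gt2 tau_h (G_Gamma0 h Gh) (G_Gamma0 g Gg) h_tau g_tau.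
Qed.
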